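(* Let $X$ be a real linear space, $T$ an infinite index set, and $f, f_t : X \to \overline{\mathbb{R}} := \mathbb{R}\cup\{\pm\infty\}$ ($t \in T$) convex proper functions. Let $h:=\sup_{t\in T} f_t$, $\Delta_1 := \operatorname{dom} f\cap\operatorname{dom} h$, and $$\sup(D_1) := \sup_{s\ge0}\inf_{x\in\Delta_1}\big(f(x)+s\,h(x)\big).$$ Let $v_1:\mathbb{R}\to\overline{\mathbb{R}}$, $v_1(r):=\inf\{f(x): h(x)\le r\}$, and let $\overline{v}_1$ be its lower semicontinuous hull, so $\overline{v}_1(0)=\min\{v_1(0),\liminf_{r\to0}v_1(r)\}$. Assume that either $\overline{v}_1(0)\neq+\infty$ or $\sup(D_1)\ne-\infty$. Then $$\sup(D_1) = \lim_{\varepsilon\downarrow0}\inf\{f(x): f_t(x)\le\varepsilon \text{ for all } t\in T\}.$$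
   Context: $\operatorname{dom} g := \{x : g(x)<+\infty\}$; a proper function never takes the value $-\infty$ and has nonempty domain. Conventions: $\inf\emptyset=+\infty$, $\sup\emptyset=-\infty$. The limit on the right exists in $\overline{\mathbb{R}}$ since the infimum is non-increasing in $\varepsilon$. *)

From HB Require Import structures.
From mathcomp Require Import all_boot all_order all_algebra.
From mathcomp Require Import all_classical all_reals all_analysis.
Set Implicit Arguments. Unset Strict Implicit. Unset Printing Implicit Defensive.
Import Order.TTheory GRing.Theory Num.Theory.
Local Open Scope classical_set_scope.
Local Open Scope ring_scope.
Local Open Scope ereal_scope.

Section defs.
Variables (R : realType) (X : lmodType R).

Definition edom (g : X -> \bar R) : set X := [set x | g x < +oo].

Definition eproper (g : X -> \bar R) : Prop :=
  (forall x, g x != -oo) /\ edom g !=set0.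

(* convexity of an extended-real valued function (used for proper functions,
   which take values in R u {+oo}; with l in ]0,1[ the products are well
   defined: l * (+oo) = +oo) *)
Definition econvex (g : X -> \bar R) : Prop :=
  forall (x y : X) (l : R), (0 < l)%R -> (l < 1)%R ->
    g ((l *: x + (1 - l) *: y)%R) <= l%:E * g x + (1 - l)%:E * g y.

Definition esupfam (T : Type) (ft : T -> X -> \bar R) : X -> \bar R :=
  fun x => ereal_sup [set ft t x | t in [set: T]].

Definition supD1 (f h : X -> \bar R) : \bar R :=
  ereal_sup [set ereal_inf [set f x + s%:E * h x | x in edom f `&` edom h]
            | s in [set s : R | (0 <= s)%R]].

Definition v1 (f h : X -> \bar R) (r : R) : \bar R :=
  ereal_inf [set f x | x in [set x | h x <= r%:E]].

Definition v1bar0 (f h : X -> \bar R) : \bar R :=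
  Order.min (v1 f h 0) (lime_inf (v1 f h) 0).

Definition infeps (T : Type) (f : X -> \bar R) (ft : T -> X -> \bar R)
  (eps : R) : \bar R :=
  ereal_inf [set f x | x in [set x | forall t, ft t x <= eps%:E]].

End defs.

From HB Require Import structures.
From mathcomp Require Import all_boot all_order all_algebra.
From mathcomp Require Import all_classical all_reals all_analysis.
From mathcomp Require Import lra.
Set Implicit Arguments. Unset Strict Implicit. Unset Printing Implicit Defensive.
Import Order.TTheory GRing.Theory Num.Theory.
Local Open Scope classical_set_scope.
Local Open Scope ring_scope.
Local Open Scope ereal_scope.

(* The quantity under the limit is v_1(eps), because h <= eps exactly when every
   f_t <= eps; v_1 is nonincreasing, so the limit is sup_{r > 0} v_1(r).  Weak
   duality, inf (f + s h) <= v_1(r) + s r for s >= 0 and r > 0, gives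
   sup(D_1) <= sup_{r > 0} v_1(r).  Conversely, if b < v_1(r0) then f > b on the
   sublevel set {h <= r0}.  If h < r0 somewhere on dom f /\ dom h, convexity of
   f and h yields a Lagrange multiplier s >= 0 with f + s h >= b there.
   Otherwise h >= r0 on that domain, so v_1 = +oo near 0 and the lower
   semicontinuous hull is +oo at 0; the hypothesis then provides a finite dual
   value, and adding a large multiple of h to it exceeds b. *)

Lemma lee_real_lt (R : realType) (x y : \bar R) :
  (forall r : R, r%:E < x -> r%:E <= y) -> x <= y.
Proof.
case: x => [x| |] xy; last exact: leNye.
- case: y xy => [y| |] xy; last 2 first.
  + by rewrite leey.
  + by have := xy (x - 1)%R; rewrite lte_fin gtrBl ltr01 leeNy_eq => /(_ isT).
  rewrite lee_fin; apply/ler_addgt0Pr => e e0.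
  by have := xy (x - e)%R; rewrite lte_fin gtrBl e0 lee_fin lerBlDr => /(_ isT).
- case: y xy => [y| |] xy //.
  + by have := xy (y + 1)%R; rewrite ltry lee_fin leNgt ltrDl ltr01 => /(_ isT).
  + by have := xy 0%R; rewrite ltry leeNy_eq => /(_ isT).
Qed.

Lemma edomE {R : realType} {X : lmodType R} {g : X -> \bar R} {x : X} :
  g x != -oo -> edom g x -> g x = (fine (g x))%:E.
Proof. by move=> gx dx; rewrite fineK // fin_numE gx lt_eqF. Qed.

Section SupFamily.
Variables (R : realType) (X : lmodType R) (T : Type) (ft : T -> X -> \bar R).

Lemma esupfam_ge t x : ft t x <= esupfam ft x.
Proof. by apply: ereal_sup_ubound; exists t. Qed.

Lemma esupfam_neqNy t x : ft t x != -oo -> esupfam ft x != -oo.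
Proof. by apply: contraNN => /eqP hx; rewrite -leeNy_eq -hx esupfam_ge. Qed.

Lemma econvex_esupfam : (forall t, econvex (ft t)) -> econvex (esupfam ft).
Proof.
move=> ft_conv x y l l0 l1; apply: ge_ereal_sup => _ [t _ <-].
apply: le_trans (ft_conv t x y l l0 l1) _.
by apply: leeD; apply: lee_wpmul2l; rewrite ?esupfam_ge // lee_fin ?subr_ge0 ltW.
Qed.

Lemma infeps_v1 (f : X -> \bar R) : infeps f ft = v1 f (esupfam ft).
Proof.
apply/funext => e; congr (ereal_inf (f @` _)); apply/seteqP; split => x /=.
- by move=> fte; apply: ge_ereal_sup => _ [t _ <-]; exact: fte.
- by move=> he t; exact: le_trans (esupfam_ge t x) he.
Qed.

End SupFamily.

Section Perturbation.
Variables (R : realType) (X : lmodType R) (f h : X -> \bar R).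

Lemma v1_nonincreasing : {homo v1 f h : r s / (r <= s)%R >-> s <= r}.
Proof.
move=> r s rs; apply: le_ereal_inf_tmp => _ [x /= hx <-].
by apply: ereal_inf_lbound; exists x => //=; rewrite (le_trans hx) ?lee_fin.
Qed.

Lemma v1_cvg_at_right :
  v1 f h e @[e --> 0%R^'+] --> ereal_sup [set v1 f h r | r in `]0%R, +oo[].
Proof.
by apply: nonincreasing_at_right_cvge => // r s _ _; exact: v1_nonincreasing.
Qed.

Lemma le_supD1 (b : R) : (exists2 s : R, (0 <= s)%R &
    forall x, edom f x -> edom h x -> b%:E <= f x + s%:E * h x) ->
  b%:E <= supD1 f h.
Proof.
move=> [s s_ge0 lb]; apply: le_trans (ereal_sup_ubound _) => /=; last by exists s.
by apply: le_ereal_inf_tmp => _ [x [fx hx] <-]; exact: lb.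
Qed.

Lemma v1bar0_eqy (r0 : R) : (0 < r0)%R ->
  (forall x, edom f x -> edom h x -> r0%:E <= h x) -> v1bar0 f h = +oo.
Proof.
move=> r0_gt0 h_ge; have v1_eqy r : (r < r0)%R -> v1 f h r = +oo.
  move=> r_lt; apply/eqP; rewrite -leye_eq.
  apply: le_ereal_inf_tmp => _ [x /= hx <-]; rewrite leye_eq.
  apply: contraT; rewrite -ltey => fx.
  have := le_trans (h_ge x fx (le_lt_trans hx (ltry r))) hx.
  by rewrite lee_fin leNgt r_lt.
rewrite /v1bar0 v1_eqy // lime_infE; apply/eqP; rewrite -leye_eq le_min lexx /=.
apply: le_ereal_sup_tmp; eexists; first by exists r0 => //=; rewrite in_itv /= r0_gt0.
rewrite leeNr; apply: ge_ereal_sup => _ [y [y_near _] <-] /=.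
rewrite v1_eqy //; move: y_near; rewrite /ball /= sub0r normrN.
exact: le_lt_trans (ler_norm y).
Qed.

Lemma supD1_neqNy_lb : supD1 f h != -oo -> exists2 s0 : R, (0 <= s0)%R &
  exists c : R, forall x, edom f x -> edom h x -> c%:E <= f x + s0%:E * h x.
Proof.
rewrite -ltNye => /ereal_sup_gt[_ [s0 /= s0_ge0 <-]].
set d := ereal_inf _ => d_gtNy; exists s0 => //; exists (fine d) => x fx hx.
have d_le : d <= f x + s0%:E * h x by apply: ereal_inf_lbound; exists x.
by apply: le_trans d_le; move: d_gtNy; case: d => [c| |] //= _; rewrite leey.
Qed.

End Perturbation.

Section Duality.
Variables (R : realType) (X : lmodType R) (f h : X -> \bar R).
Hypotheses (fNy : forall x, f x != -oo) (hNy : forall x, h x != -oo).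

Lemma supD1_le_sup_v1 :
  supD1 f h <= ereal_sup [set v1 f h r | r in `]0%R, +oo[].
Proof.
apply: ge_ereal_sup => _ [s /= s_ge0 <-].
apply/lee_addgt0Pr => e e_gt0; pose eps := (e / (s + 1))%R.
have s1_gt0 : (0 < s + 1)%R by rewrite ltr_wpDl.
have eps_gt0 : (0 < eps)%R by rewrite divr_gt0.
have seps_le : (s * eps <= e)%R.
  have : (eps * (s + 1) = e)%R by rewrite divfK ?gt_eqF.
  nra.
apply: le_trans (_ : v1 f h eps + e%:E <= _); last first.
  rewrite leeD2r //; apply: ereal_sup_ubound.
  by exists eps; rewrite //= in_itv /= eps_gt0.
rewrite -leeBlDr //; apply: le_ereal_inf_tmp => _ [x /= hx <-].
rewrite EFinN leeBlDr //; have [fx|] := ltP (f x) +oo; last first.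
  by rewrite leye_eq => /eqP ->; rewrite addye ?leey.
have hx' : edom h x by exact: le_lt_trans hx (ltry _).
apply: le_trans (_ : f x + s%:E * h x <= _); first by apply: ereal_inf_lbound; exists x.
move: hx; rewrite (edomE (fNy x) fx) (edomE (hNy x) hx') -EFinM -!EFinD !lee_fin.
by rewrite lerD2l => /(ler_wpM2l s_ge0)/le_trans; apply.
Qed.

Lemma multiplier_of_lb (r0 b c s0 : R) : (0 < r0)%R -> (0 <= s0)%R ->
  (forall x, edom f x -> edom h x -> r0%:E <= h x) ->
  (forall x, edom f x -> edom h x -> c%:E <= f x + s0%:E * h x) ->
  exists2 s : R, (0 <= s)%R &
    forall x, edom f x -> edom h x -> b%:E <= f x + s%:E * h x.
Proof.
move=> r0_gt0 s0_ge0 h_ge lb; pose m := Num.max 0%R ((b - c) / r0)%R.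
have m_ge0 : (0 <= m)%R by rewrite le_max lexx.
have bc_le : (b - c <= m * r0)%R by rewrite -ler_pdivrMr // le_max lexx orbT.
exists (s0 + m)%R => [|x fx hx]; first exact: addr_ge0.
move: (h_ge x fx hx) (lb x fx hx).
rewrite (edomE (fNy x) fx) (edomE (hNy x) hx) -!EFinM -!EFinD !lee_fin.
nra.
Qed.

End Duality.

Section Slater.
Variables (R : realType) (X : lmodType R) (f h : X -> \bar R).
Hypotheses (fNy : forall x, f x != -oo) (hNy : forall x, h x != -oo).
Hypotheses (f_conv : econvex f) (h_conv : econvex h).
Variables (b r0 : R).
Hypothesis r0_gt0 : (0 < r0)%R.
Hypothesis f_gt_on_level : forall z, h z <= r0%:E -> b%:E < f z.

Let dom x := edom f x /\ edom h x.

(* The point of [x, y] where the chord of h takes the value c lies in {h <= r0},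
   where f > b; convexity of f then bounds f there by the chord of f. *)
Lemma level_chord_gt0 {x y c} : dom x -> dom y ->
  (fine (h x) < c)%R -> (c <= r0)%R -> (c < fine (h y))%R ->
  (0 < (c - fine (h x)) * (fine (f y) - b) + (fine (h y) - c) * (fine (f x) - b))%R.
Proof.
move=> [fx hx] [fy hy].
move: (edomE (fNy x) fx) (edomE (hNy x) hx) (edomE (fNy y) fy) (edomE (hNy y) hy).
set a := fine (f x); set u := fine (h x); set a' := fine (f y); set u' := fine (h y).
move=> fxE hxE fyE hyE u_lt c_le u'_gt; pose l := ((c - u) / (u' - u))%R.
have uu'_gt0 : (0 < u' - u)%R by lra.
have l_gt0 : (0 < l)%R by rewrite divr_gt0 // subr_gt0.
have l_lt1 : (l < 1)%R by rewrite ltr_pdivrMr // mul1r; lra.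
have lE : (l * (u' - u) = c - u)%R by rewrite divfK // gt_eqF.
have hz_le : h (l *: y + (1 - l) *: x)%R <= r0%:E.
  apply: le_trans (h_conv y x l_gt0 l_lt1) _.
  by rewrite hxE hyE -!EFinM -EFinD lee_fin; nra.
have := lt_le_trans (f_gt_on_level hz_le) (f_conv y x l_gt0 l_lt1).
rewrite fxE fyE -!EFinM -EFinD lte_fin -subr_gt0 => /(mulr_gt0 uu'_gt0).
nra.
Qed.

Lemma level_fine {x} : dom x -> (fine (h x) <= r0)%R -> (b < fine (f x))%R.
Proof.
move=> [fx hx] hx_le; rewrite -lte_fin -(edomE (fNy x) fx).
by apply: f_gt_on_level; rewrite (edomE (hNy x) hx) lee_fin.
Qed.

Lemma multiplier_slater w : dom w -> h w < r0%:E ->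
  exists2 s : R, (0 <= s)%R &
    forall x, edom f x -> edom h x -> b%:E <= f x + s%:E * h x.
Proof.
move=> dw; rewrite (edomE (hNy w) dw.2) lte_fin => hw_lt.
(* sup S is the least multiplier that works at the points with h > 0;
   [level_chord_gt0] shows that it also works where h < 0. *)
pose S := [set 0%R] `|` [set ((b - fine (f x)) / fine (h x))%R
                           | x in [set x | dom x /\ (0 < fine (h x))%R]].
have S_ub : ubound S ((fine (f w) - b) / (r0 - fine (h w)))%R.
  have fw_gt : (0 < fine (f w) - b)%R by rewrite subr_gt0 (level_fine dw (ltW hw_lt)).
  move=> _ [->|[x [dx hx_gt0] <-]].
    by apply: divr_ge0; apply: ltW; rewrite // subr_gt0.
  rewrite ler_pdivrMr // mulrAC ler_pdivlMr ?subr_gt0 //.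
  have [hx_le|hx_gt] := leP (fine (h x)) r0; first by have := level_fine dx hx_le; nra.
  have := level_chord_gt0 dw dx hw_lt (lexx r0) hx_gt.
  have := mulr_gt0 r0_gt0 fw_gt; nra.
have S_le_neg x : dom x -> (fine (h x) < 0)%R ->
    ubound S ((fine (f x) - b) / - fine (h x))%R.
  move=> dx hx_lt; have fx_gt := level_fine dx (ltW (lt_le_trans hx_lt (ltW r0_gt0))).
  move=> _ [->|[y [dy hy_gt0] <-]].
    by apply: divr_ge0; rewrite ?oppr_ge0 ?subr_ge0 ltW.
  rewrite ler_pdivrMr // mulrAC ler_pdivlMr ?oppr_gt0 //.
  by have := level_chord_gt0 dx dy hx_lt (ltW r0_gt0) hy_gt0; nra.
have S_sup : has_sup S by split; [exists 0%R; left | eexists; exact: S_ub].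
exists (sup S); first by apply: sup_upper_bound => //; left.
move=> x fx hx; have dx : dom x by [].
rewrite (edomE (fNy x) fx) (edomE (hNy x) hx) -EFinM -EFinD lee_fin.
case: (ltgtP (fine (h x)) 0%R) => [hx_lt|hx_gt|hx0]; last first.
- by rewrite hx0 mulr0 addr0; apply/ltW/(level_fine dx); rewrite hx0 ltW.
- have : ((b - fine (f x)) / fine (h x) <= sup S)%R.
    by apply: sup_upper_bound => //; right; exists x.
  by rewrite ler_pdivrMr // => ?; lra.
- have : (sup S <= (fine (f x) - b) / - fine (h x))%R.
    by apply: ge_sup; [exists 0%R; left | exact: S_le_neg].
  by rewrite ler_pdivlMr ?oppr_gt0 // => ?; nra.
Qed.

End Slater.

Lemma sup_v1_le_supD1 (R : realType) (X : lmodType R) (f h : X -> \bar R) :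
  (forall x, f x != -oo) -> (forall x, h x != -oo) -> econvex f -> econvex h ->
  v1bar0 f h != +oo \/ supD1 f h != -oo ->
  ereal_sup [set v1 f h r | r in `]0%R, +oo[] <= supD1 f h.
Proof.
move=> fNy hNy f_conv h_conv qualif.
apply: lee_real_lt => b /ereal_sup_gt[_ [r0 r0_in <-] b_lt].
have r0_gt0 : (0 < r0)%R by move: r0_in; rewrite /= in_itv /= andbT.
have f_gt_on_level z : h z <= r0%:E -> b%:E < f z.
  by move=> hz; apply: lt_le_trans b_lt _; apply: ereal_inf_lbound; exists z.
apply: le_supD1.
have [[w [fw hw hw_lt]]|no_slater] :=
  pselect (exists w, [/\ edom f w, edom h w & h w < r0%:E]).
  exact: (multiplier_slater fNy hNy f_conv h_conv r0_gt0 f_gt_on_level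
            (conj fw hw) hw_lt).
have h_ge x : edom f x -> edom h x -> r0%:E <= h x.
  by move=> fx hx; rewrite leNgt; apply/negP => hx_lt; apply: no_slater; exists x.
have : supD1 f h != -oo by case: qualif => [|//]; rewrite (v1bar0_eqy r0_gt0 h_ge).
move=> /supD1_neqNy_lb[s0 s0_ge0 [c lb]].
exact: (multiplier_of_lb fNy hNy b r0_gt0 s0_ge0 h_ge lb).
Qed.

Theorem proposition3p1 (R : realType) (X : lmodType R) (T : Type)
  (f : X -> \bar R) (ft : T -> X -> \bar R) :
  infinite_set [set: T] ->
  eproper f -> econvex f ->
  (forall t, eproper (ft t)) -> (forall t, econvex (ft t)) ->
  (v1bar0 f (esupfam ft) != +oo \/ supD1 f (esupfam ft) != -oo) ->
  infeps f ft e @[e --> 0%R^'+] --> supD1 f (esupfam ft).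
Proof.
move=> T_inf [fNy _] f_conv ft_proper ft_conv qualif.
have [t0 _] := infinite_setN0 T_inf.
have hNy x : esupfam ft x != -oo := esupfam_neqNy ((ft_proper t0).1 x).
have h_conv := econvex_esupfam ft_conv.
suff -> : supD1 f (esupfam ft) = ereal_sup [set v1 f (esupfam ft) r | r in `]0%R, +oo[].
  by rewrite infeps_v1; exact: v1_cvg_at_right.
by apply/eqP; rewrite eq_le supD1_le_sup_v1 // sup_v1_le_supD1.
Qed.
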